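(* Let $G$ be a cograph, let $(T,t)$ be an arbitrary binary cotree of $G$, and let $\sigma$ be a greedy coloring of $G$. Then $\sigma$ is an hc-coloring with respect to $(T,t)$.
   Context: All graphs are finite, simple and undirected. A (proper vertex) coloring of $G=(V,E)$ is a surjective map $\sigma:V\to S$ with $\sigma(x)\neq\sigma(y)$ whenever $xy\in E$. A greedy coloring is a coloring $\sigma:V\to S$ for which there exist a linear order on $S$ and an ordering of $V$ such that processing the vertices in that order, each vertex receives the smallest color of $S$ not already assigned to one of its previously processed neighbors. A cograph is a graph that is $K_1$, or a disjoint union of cographs, or a join of cographs. A cotree $(T,t)$ of a cograph $G$ is a rooted tree $T$ with leaf set $V$ and a labeling $t:V^0(T)\to\{0,1\}$ of its inner vertices such that for every inner vertex $u$, $G(u):=G[L(T(u))]$ (with $L(T(u))$ the leaves descending from $u$) is the disjoint union (if $t(u)=0$) or the join (if $t(u)=1$) of the graphs $G(v)$, $v$ a child of $u$. It is binary if every inner vertex has exactly two children. A coloring $\sigma$ is an hc-coloring with respect to a binary cotree $(T,t)$ if for every inner vertex $u$ with children $v_1,v_2$: if $t(u)=1$ then $\sigma(L(T(v_1)))\cap\sigma(L(T(v_2)))=\emptyset$, and if $t(u)=0$ then one of $\sigma(L(T(v_1)))$, $\sigma(L(T(v_2)))$ contains the other. *)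

From mathcomp Require Import all_boot.
Set Implicit Arguments. Unset Strict Implicit. Unset Printing Implicit Defensive.

Definition simple_graph (V : finType) (adj : rel V) : Prop :=
  symmetric adj /\ irreflexive adj.

(* Binary rooted trees with leaves labelled by vertices and inner vertices
   labelled by t(u) in {0,1} (false = 0 = disjoint union, true = 1 = join). *)
Inductive bintree (V : Type) : Type :=
| Leaf of V
| Node of bool & bintree V & bintree V.
Arguments Leaf {V} _.
Arguments Node {V} _ _ _.

Fixpoint leaves (V : Type) (T : bintree V) : seq V :=
  match T with
  | Leaf x => [:: x]
  | Node _ l r => leaves l ++ leaves r
  end.

(* Local cotree condition at every inner vertex: G(u) is the disjoint union
   (label 0) resp. the join (label 1) of G(v1) and G(v2). Since G(v_i) are
   induced subgraphs of G(u), this amounts to: no edges (label 0) resp. all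
   edges (label 1) between L(T(v1)) and L(T(v2)). *)
Fixpoint cotree_ok (V : finType) (adj : rel V) (T : bintree V) : Prop :=
  match T with
  | Leaf _ => True
  | Node b l r =>
      (forall x y, x \in leaves l -> y \in leaves r -> adj x y = b)
      /\ cotree_ok adj l /\ cotree_ok adj r
  end.

Definition binary_cotree (V : finType) (adj : rel V) (T : bintree V) : Prop :=
  uniq (leaves T) /\ (forall v : V, v \in leaves T) /\ cotree_ok adj T.

Definition coloring (V S : finType) (adj : rel V) (sigma : V -> S) : Prop :=
  (forall c : S, exists x : V, sigma x = c) /\
  (forall x y : V, adj x y -> sigma x != sigma y).

Definition linear_order (S : Type) (le : rel S) : Prop :=
  reflexive le /\ antisymmetric le /\ transitive le /\ total le.

Definition greedy_coloring (V S : finType) (adj : rel V) (sigma : V -> S) : Prop :=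
  coloring adj sigma /\
  exists (le : rel S) (s : seq V),
    linear_order le /\ uniq s /\ (forall v : V, v \in s) /\
    forall (p : seq V) (v : V) (q : seq V), s = p ++ v :: q ->
      let used := [seq sigma u | u <- p & adj u v] in
      sigma v \notin used /\
      (forall c : S, c \notin used -> le (sigma v) c).

Definition colset (V S : finType) (sigma : V -> S) (T : bintree V) : {set S} :=
  [set sigma x | x in leaves T].

Fixpoint hc_ok (V S : finType) (sigma : V -> S) (T : bintree V) : Prop :=
  match T with
  | Leaf _ => True
  | Node b l r =>
      (if b then [disjoint colset sigma l & colset sigma r]
       else (colset sigma l \subset colset sigma r) ||
            (colset sigma r \subset colset sigma l))
      /\ hc_ok sigma l /\ hc_ok sigma r
  end.

Definition hc_coloring (V S : finType) (adj : rel V) (T : bintree V)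
  (sigma : V -> S) : Prop :=
  coloring adj sigma /\ hc_ok sigma T.

From mathcomp Require Import all_boot.

Set Implicit Arguments.
Unset Strict Implicit.
Unset Printing Implicit Defensive.

(* A greedy coloring has the Grundy property: every color below sigma v is
   seen on a neighbour of v.  The leaves of every subtree of a cotree form a
   module.  At a join node the two sides are completely adjacent, so their
   color sets are disjoint.  At a union node, let a be a vertex of largest
   color on one side and b one on the other, say sigma a <= sigma b.  A
   color c of the first side below sigma b is carried by a neighbour w of b;
   w is not on the first side (no edges cross), and if it were outside both
   sides it would, by modularity, also be adjacent to the vertex of color c,
   contradicting properness.  So w lies on the second side. *)

Definition grundy (V : Type) (S : eqType) (adj : rel V) (le : rel S)
    (sigma : V -> S) : Prop :=
  forall v c, le c (sigma v) -> c != sigma v -> exists2 w, adj w v & sigma w = c.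

Definition graph_module (V : eqType) (adj : rel V) (A : seq V) : Prop :=
  forall w x y, w \notin A -> x \in A -> y \in A -> adj w x = adj w y.

Lemma greedy_grundy (V S : eqType) (adj : rel V) (le : rel S) (sigma : V -> S)
    (s : seq V) :
  antisymmetric le -> (forall v, v \in s) ->
  (forall p v q, s = p ++ v :: q ->
     forall c, c \notin [seq sigma u | u <- p & adj u v] -> le (sigma v) c) ->
  grundy adj le sigma.
Proof.
move=> le_anti s_all greedy v c le_c_v neq_c_v.
case/splitPr: (s_all v) greedy => p q greedy.
have [/mapP [u] | c_unused] := boolP (c \in [seq sigma u | u <- p & adj u v]).
  by rewrite mem_filter => /andP [adj_uv _] ->; exists u.
by case/eqP: neq_c_v; apply: le_anti; rewrite le_c_v (greedy p v q).
Qed.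

Lemma exists_rel_max (T : eqType) (R : rel T) (s : seq T) :
  total R -> transitive R -> s != [::] ->
  exists2 a, a \in s & {in s, forall x, R x a}.
Proof.
move=> R_total R_trans s_neq0; pose R' x y := R y x.
have R'_trans : transitive R' by move=> y x z Ryx Rzy; exact: R_trans Rzy Ryx.
have := sort_sorted (fun x y => R_total y x) s.
have := mem_sort R' s.
case: (sort R' s) => [|a t] mem_s sorted_at.
  by case: s s_neq0 mem_s => // y s' _ /(_ y); rewrite mem_head.
exists a; first by rewrite -mem_s mem_head.
move=> x; rewrite -mem_s in_cons => /predU1P [-> | x_t].
  by case/orP: (R_total a a).
exact: (allP (order_path_min R'_trans sorted_at)).
Qed.

Lemma leaves_neq0 (V : eqType) (T : bintree V) : leaves T != [::].
Proof. by elim: T => [//|_ l IHl r _] /=; case: (leaves l) IHl. Qed.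

Section CotreeColoring.

Variables (V S : finType) (adj : rel V) (le : rel S) (sigma : V -> S).
Hypotheses (adj_sym : symmetric adj) (le_total : total le)
  (le_trans : transitive le)
  (sigma_proper : forall x y, adj x y -> sigma x != sigma y)
  (sigma_grundy : grundy adj le sigma).

Lemma graph_module_catl b (A B : seq V) :
  (forall x y, x \in A -> y \in B -> adj x y = b) ->
  graph_module adj (A ++ B) -> graph_module adj A.
Proof.
move=> cross modAB w x y w_A x_A y_A.
have [w_B | w_B] := boolP (w \in B); first by rewrite !(adj_sym w) !cross.
by apply: modAB; rewrite ?mem_cat ?x_A ?y_A ?negb_or ?w_A.
Qed.

Lemma graph_module_catr b (A B : seq V) :
  (forall x y, x \in A -> y \in B -> adj x y = b) ->
  graph_module adj (A ++ B) -> graph_module adj B.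
Proof.
move=> cross modAB w x y w_B x_B y_B.
have [w_A | w_A] := boolP (w \in A); first by rewrite !cross.
by apply: modAB; rewrite ?mem_cat ?x_B ?y_B ?orbT ?negb_or ?w_A.
Qed.

Lemma join_colset_disjoint (A B : seq V) :
  (forall x y, x \in A -> y \in B -> adj x y) ->
  [disjoint [set sigma x | x in A] & [set sigma y | y in B]].
Proof.
move=> cross; rewrite -setI_eq0; apply/eqP/setP => c; rewrite !inE.
apply/negP => /andP [/imsetP [x x_A ->] /imsetP [y y_B /eqP]].
by apply/negP/sigma_proper/cross.
Qed.

Lemma union_colset_subset (A B : seq V) a b :
  (forall x y, x \in A -> y \in B -> ~~ adj x y) ->
  graph_module adj (A ++ B) ->
  {in A, forall x, le (sigma x) (sigma a)} ->
  b \in B -> le (sigma a) (sigma b) ->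
  [set sigma x | x in A] \subset [set sigma y | y in B].
Proof.
move=> cross modAB a_max b_B le_ab; apply/subsetP => _ /imsetP [x x_A ->].
have [-> | neq_xb] := eqVneq (sigma x) (sigma b); first exact: imset_f.
have [w adj_wb sigma_w] := sigma_grundy (le_trans (a_max x x_A) le_ab) neq_xb.
have [w_B | w_B] := boolP (w \in B); first by rewrite -sigma_w imset_f.
have [w_A | w_A] := boolP (w \in A); first by rewrite (negPf (cross w b _ _)) in adj_wb.
have adj_wx : adj w x.
  by rewrite (modAB w x b) ?mem_cat ?x_A ?b_B ?orbT ?negb_or ?w_A.
by have := sigma_proper adj_wx; rewrite sigma_w eqxx.
Qed.

Lemma union_colset_comparable (A B : seq V) :
  A != [::] -> B != [::] ->
  (forall x y, x \in A -> y \in B -> ~~ adj x y) ->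
  graph_module adj (A ++ B) ->
  ([set sigma x | x in A] \subset [set sigma y | y in B]) ||
  ([set sigma y | y in B] \subset [set sigma x | x in A]).
Proof.
move=> A_neq0 B_neq0 cross modAB.
pose Rsigma := [rel x y | le (sigma x) (sigma y)].
have Rsigma_total : total Rsigma by move=> x y; exact: le_total.
have Rsigma_trans : transitive Rsigma by move=> y x z; exact: le_trans.
have [a a_A a_max] := exists_rel_max Rsigma_total Rsigma_trans A_neq0.
have [b b_B b_max] := exists_rel_max Rsigma_total Rsigma_trans B_neq0.
have [le_ab | le_ba] := orP (le_total (sigma a) (sigma b)).
  by rewrite (union_colset_subset cross modAB a_max b_B le_ab).
apply/orP; right; apply: (union_colset_subset _ _ b_max a_A le_ba).
  by move=> y x y_B x_A; rewrite adj_sym cross.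
have mem_BA : B ++ A =i A ++ B by apply: perm_mem; rewrite perm_catC.
by move=> w x y; rewrite !mem_BA; exact: modAB.
Qed.

Lemma hc_ok_of_module (T : bintree V) :
  cotree_ok adj T -> graph_module adj (leaves T) -> hc_ok sigma T.
Proof.
elim: T => [//|b l IHl r IHr] /= [cross [ok_l ok_r]] mod_lr.
split; last split.
- case: b cross => cross; first exact: join_colset_disjoint.
  apply: union_colset_comparable; rewrite ?leaves_neq0 //.
  by move=> x y x_l y_r; rewrite cross.
- exact: IHl (graph_module_catl cross mod_lr).
- exact: IHr (graph_module_catr cross mod_lr).
Qed.

End CotreeColoring.

Theorem lemma5 (V S : finType) (adj : rel V) (T : bintree V) (sigma : V -> S) :
  simple_graph adj ->
  binary_cotree adj T ->
  greedy_coloring adj sigma ->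
  hc_coloring adj T sigma.
Proof.
move=> [adj_sym _] [_ [T_all ok_T]] [col [le [s [le_linear [_ [s_all greedy]]]]]].
have [_ [le_anti [le_trans le_total]]] := le_linear.
have sigma_grundy : grundy adj le sigma.
  by apply: (greedy_grundy le_anti s_all) => p v q /greedy [].
split=> //; apply: (hc_ok_of_module adj_sym le_total le_trans col.2 sigma_grundy ok_T).
by move=> w; rewrite T_all.
Qed.
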